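(* Let $\mathcal P_X,\mathcal P_Y$ be probability measures on a measurable space $(E,\mathcal E)$ with $\mathcal P_Y\ll\mathcal P_X$, let $L=d\mathcal P_Y/d\mathcal P_X$, and assume $L(\mathbf Z)$ has a continuous distribution when $\mathbf Z\sim\mathcal P_X$. Let $\mathbf Z_X,\mathbf Z_X'$ be i.i.d. with law $\mathcal P_X$ and define $\delta:=\mathbb E\,|L(\mathbf Z_X)-L(\mathbf Z_X')|$. Then $$2\,d_{tv}(\mathcal P_X,\mathcal P_Y)\le \delta\le 4\,d_{tv}(\mathcal P_X,\mathcal P_Y).$$
   Context: $d_{tv}(\mathcal P_X,\mathcal P_Y)=\sup_{A\in\mathcal E}|\mathcal P_Y(A)-\mathcal P_X(A)|$ denotes the total variation distance. *)

From HB Require Import structures.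
From mathcomp Require Import all_boot all_order all_algebra.
From mathcomp Require Import all_classical all_reals all_analysis.
Set Implicit Arguments. Unset Strict Implicit. Unset Printing Implicit Defensive.
Import Order.TTheory GRing.Theory Num.Theory.
Local Open Scope classical_set_scope.
Local Open Scope ring_scope.
Local Open Scope ereal_scope.

Definition dtv (d : measure_display) (T : measurableType d) (R : realType)
  (PX PY : probability T R) : \bar R :=
  ereal_sup [set `|PY A - PX A| | A in [set A | measurable A]].

(* Let dev1 := E|L(Z) - 1| for Z ~ P_X.  Since E (L(Z) - 1) = 0, splitting
   this expectation over an event A and its complement gives
   2 |P_Y(A) - P_X(A)| <= dev1, with equality for A = {L > 1}; hence
   dev1 = 2 d_tv.  Integrating out Z' in E|L(Z) - L(Z')|, Jensen's inequality
   with E L(Z') = 1 gives |L(Z) - 1| <= E[|L(Z) - L(Z')| | Z], and the triangle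
   inequality through 1 gives E[|L(Z) - L(Z')| | Z] <= |L(Z) - 1| + dev1;
   so dev1 <= delta <= 2 dev1. *)

From HB Require Import structures.
From mathcomp Require Import all_boot all_order all_algebra.
From mathcomp Require Import all_classical all_reals all_analysis.
From mathcomp Require Import measurable_realfun.
From mathcomp Require Import lra ring.
Import Order.TTheory GRing.Theory Num.Theory.
Local Open Scope classical_set_scope.
Local Open Scope ring_scope.
Local Open Scope ereal_scope.

Section density.
Context {d : measure_display} {T : measurableType d} {R : realType}.
Context {PX PY : probability T R} {L : T -> R}.
Hypothesis mL : measurable_fun setT L.
Hypothesis L_ge0 : forall z, (0 <= L z)%R.
Hypothesis PY_density :
  forall A, measurable A -> PY A = \int[PX]_(z in A) (L z)%:E.

Lemma density_integrable A : measurable A -> PX.-integrable A (EFin \o L).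
Proof.
move=> mA; apply/integrableP; split.
  by apply/measurable_EFinP; exact: measurable_funS mL.
rewrite (eq_integral (fun z => (L z)%:E)); last by move=> z _ /=; rewrite ger0_norm.
by rewrite -PY_density // (le_lt_trans (probability_le1 PY mA)) ?ltry.
Qed.

Lemma integral_density_subr A (c : R) : measurable A ->
  \int[PX]_(z in A) ((L z)%:E - c%:E) = PY A - c%:E * PX A.
Proof.
move=> mA; rewrite (integralB_EFin (f2 := fun=> c)) //.
- by rewrite -PY_density // integral_cst.
- exact: density_integrable.
- exact: finite_measure_integrable_cst.
Qed.

Lemma integral_subr_density A (c : R) : measurable A ->
  \int[PX]_(z in A) (c%:E - (L z)%:E) = c%:E * PX A - PY A.
Proof.
move=> mA; rewrite (integralB_EFin (f1 := fun=> c)) //.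
- by rewrite -PY_density // integral_cst.
- exact: finite_measure_integrable_cst.
- exact: density_integrable.
Qed.

Let dev1 := \int[PX]_(z in setT) `|(L z - 1)%:E|.

Let measurable_abs_subr (c : R) (D : set T) :
  measurable_fun D (fun z => `|(L z - c)%:E|).
Proof.
apply: measurableT_comp => //; apply/measurable_EFinP.
by apply: measurable_funB; [exact: measurable_funS mL|exact: measurable_cst].
Qed.

Let measurable_abs_sub_at x : measurable_fun setT (fun y => `|(L x - L y)%:E|).
Proof.
apply: measurableT_comp => //; apply/measurable_EFinP.
by apply: measurable_funB => //; exact: measurable_cst.
Qed.

Lemma abs_sub_measure_le_integral A : measurable A ->
  `|PY A - PX A| <= \int[PX]_(z in A) `|(L z - 1)%:E|.
Proof.
move=> mA; rewrite -[PX A]mul1e -integral_density_subr //.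
under eq_integral do rewrite -EFinB.
apply: le_abse_integral => //; apply/measurable_EFinP.
by apply: measurable_funB; [exact: measurable_funS mL|exact: measurable_cst].
Qed.

Lemma abs_sub_measureC A : measurable A ->
  `|PY (~` A) - PX (~` A)| = `|PY A - PX A|.
Proof.
move=> mA; rewrite !probability_setC //.
rewrite -[PX A]fineK ?fin_num_measure // -[PY A]fineK ?fin_num_measure //.
by rewrite -!EFinB !abse_EFin -normrN; congr (`|_|%:E); ring.
Qed.

Lemma twice_abs_sub_measure_le A : measurable A ->
  2%:E * `|PY A - PX A| <= dev1.
Proof.
move=> mA; rewrite /dev1 -(setUCr A) ge0_integral_setU //; last 2 first.
- exact: measurableC.
- exact/disj_setPCl.
rewrite mule_natl mule2n.
apply: leeD; first exact: abs_sub_measure_le_integral.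
rewrite -abs_sub_measureC //; exact/abs_sub_measure_le_integral/measurableC.
Qed.

Let A1 := L @^-1` `]1%R, +oo[.

Let measurable_A1 : measurable A1.
Proof. by rewrite -[A1]setTI; apply: mL => //; exact: measurable_itv. Qed.

Lemma dev1_superlevel : dev1 = 2%:E * (PY A1 - PX A1).
Proof.
rewrite /dev1 -(setUCr A1) ge0_integral_setU //; last 2 first.
- exact: measurableC.
- exact/disj_setPCl.
rewrite (eq_integral (fun z => (L z)%:E - 1%:E)); last first.
  move=> z; rewrite inE /A1 /= in_itv andbT => L1.
  by rewrite gtr0_norm ?subr_gt0 // EFinB.
rewrite integral_density_subr // mul1e.
rewrite (eq_integral (fun z => 1%:E - (L z)%:E)); last first.
  move=> z; rewrite inE /A1 /= in_itv andbT => /negP; rewrite -leNgt => L1.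
  by rewrite ler0_norm ?subr_le0 // opprB EFinB.
rewrite integral_subr_density ?mul1e; last exact: measurableC.
rewrite !probability_setC //.
rewrite -[PX A1]fineK ?fin_num_measure // -[PY A1]fineK ?fin_num_measure //.
by rewrite -!EFinB -!EFinD -EFinM; congr EFin; ring.
Qed.

Lemma twice_dtv_le_dev1 : 2%:E * dtv PX PY <= dev1.
Proof.
rewrite -lee_pdivlMl //; apply: ge_ereal_sup => _ [A mA <-].
by rewrite lee_pdivlMl //; exact: twice_abs_sub_measure_le.
Qed.

Lemma dev1_le_twice_dtv : dev1 <= 2%:E * dtv PX PY.
Proof.
rewrite dev1_superlevel; apply: lee_wpmul2l => //.
by apply: le_trans (lee_abs _) _; apply: ereal_sup_ubound; exists A1.
Qed.

Lemma abs_dev1_le_integral x :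
  `|(L x - 1)%:E| <= \int[PX]_y `|(L x - L y)%:E|.
Proof.
have := integral_subr_density setT (L x) measurableT.
rewrite !probability_setT mule1 -EFinB => <-.
under [X in _ <= X]eq_integral do rewrite EFinB.
apply: le_abse_integral => //; apply/measurable_EFinP.
by apply: measurable_funB => //; exact: measurable_cst.
Qed.

Lemma integral_le_abs_dev1 x :
  \int[PX]_y `|(L x - L y)%:E| <= `|(L x - 1)%:E| + dev1.
Proof.
apply: (@le_trans _ _ (\int[PX]_y (`|(L x - 1)%:E| + `|(L y - 1)%:E|))).
  apply: ge0_le_integral => //.
  - by apply: emeasurable_funD; [exact: measurable_cst|exact: measurable_abs_subr].
  move=> y _; rewrite -EFinD lee_fin.
  by rewrite (_ : L x - L y = (L x - 1) - (L y - 1))%R ?ler_normB //; ring.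
by rewrite ge0_integralD // integral_cst //= probability_setT mule1.
Qed.

Let delta := \int[PX \x PX]_(w in setT) `|(L w.1 - L w.2)%:E|.

Let measurable_abs_sub :
  measurable_fun setT (fun w : T * T => `|(L w.1 - L w.2)%:E|).
Proof.
apply: measurableT_comp => //; apply/measurable_EFinP.
by apply: measurable_funB; exact: measurableT_comp mL _.
Qed.

Let measurable_integral_abs_sub :
  measurable_fun setT (fun x => \int[PX]_y `|(L x - L y)%:E|).
Proof.
exact: (@measurable_fun_fubini_tonelli_F _ _ _ _ _ PX _ measurable_abs_sub).
Qed.

Let delta_iterated : delta = \int[PX]_x \int[PX]_y `|(L x - L y)%:E|.
Proof. by rewrite /delta fubini_tonelli1. Qed.

Lemma dev1_le_delta : dev1 <= delta.
Proof.
by rewrite delta_iterated; apply: ge0_le_integral => // x _;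
  exact: abs_dev1_le_integral.
Qed.

Lemma delta_le_twice_dev1 : delta <= 2%:E * dev1.
Proof.
rewrite delta_iterated.
apply: (@le_trans _ _ (\int[PX]_x (`|(L x - 1)%:E| + dev1))).
  apply: ge0_le_integral => //.
  - by move=> x _; exact: integral_ge0.
  - by apply: emeasurable_funD => //; exact: measurable_cst.
  - by move=> x _; exact: integral_le_abs_dev1.
rewrite ge0_integralD //; last by move=> x _; exact: integral_ge0.
by rewrite integral_cst //= probability_setT mule1 mule_natl mule2n.
Qed.

End density.

Theorem proposition2 (d : measure_display) (T : measurableType d) (R : realType)
  (PX PY : probability T R) (L : T -> R) :
  PY `<< PX ->
  measurable_fun setT L ->
  (forall z, (0 <= L z)%R) ->
  (forall A, measurable A -> PY A = \int[PX]_(z in A) (L z)%:E) ->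
  (forall c : R, PX [set z | L z = c] = 0) ->
  let delta := \int[PX \x PX]_(w in setT) `|(L w.1 - L w.2)%:E| in
  2%:E * dtv PX PY <= delta /\ delta <= 4%:E * dtv PX PY.
Proof.
move=> _ mL L_ge0 PY_density _ delta; split.
- apply: le_trans (twice_dtv_le_dev1 mL L_ge0 PY_density) _.
  exact: dev1_le_delta mL L_ge0 PY_density.
- apply: le_trans (delta_le_twice_dev1 (PX:=PX) mL) _.
  have -> : 4%:E = 2%:E * 2%:E :> \bar R by rewrite -EFinM; congr EFin; lra.
  rewrite -muleA; apply: lee_wpmul2l => //.
  exact: dev1_le_twice_dtv mL L_ge0 PY_density.
Qed.
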